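(* Let $n>2$ and let $\psi\in V(n-1)$. Then for all $x,y\in\mathbb{R}^{n,+}$ one has $\psi(\hat y)=\widehat{\psi(y)}$ and $$\|C(x,y)\|=\|C(\psi(x),\psi(y))\|,$$ where $C(x,y)=e_n(x-y)(x-\hat y)^{-1}$.
   Context: $Cl_n$ is the real Clifford algebra generated by an orthonormal basis $e_1,\dots,e_n$ of $\mathbb{R}^n$ with $e_ie_j+e_je_i=-2\delta_{ij}$; vectors $x=\sum x_je_j$ of $\mathbb{R}^n$ are viewed in $Cl_n$, and a nonzero vector has inverse $x^{-1}=-x/\|x\|^2$. $\mathbb{R}^{n,+}=\{x:x_n>0\}$. For $y=y_1e_1+\dots+y_ne_n$, $\hat y=y_1e_1+\dots+y_{n-1}e_{n-1}-y_ne_n$ (reflection in $\mathbb{R}^{n-1}=\mathrm{span}\{e_1,\dots,e_{n-1}\}$). For $A=\sum_A a_Ae_A\in Cl_n$, $\|A\|=(\sum_A a_A^2)^{1/2}$. The reversion $\sim$ is the anti-automorphism of $Cl_n$ with $\widetilde{e_{j_1}\cdots e_{j_r}}=e_{j_r}\cdots e_{j_1}$. $V(n-1)$ denotes the (Vahlen) group of Möbius transformations of $\mathbb{R}^n\cup\{\infty\}$ of the form $\psi(x)=(ax+b)(cx+d)^{-1}$ where $a,b,c,d\in Cl_{n-1}$ are each products of vectors of $\mathbb{R}^{n-1}$ (or zero), $\tilde a c,\ \tilde c d,\ \tilde d b,\ \tilde b a\in\mathbb{R}^{n-1}$ and $\tilde a d-\tilde b c=\pm1$; these are the extensions to $\mathbb{R}^n\cup\{\infty\}$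 of the Möbius transformations of $\mathbb{R}^{n-1}\cup\{\infty\}$. *)

From HB Require Import structures.
From mathcomp Require Import all_boot all_order all_algebra.
From mathcomp Require Import reals.
From Stdlib Require Import ClassicalEpsilon.
Set Implicit Arguments. Unset Strict Implicit. Unset Printing Implicit Defensive.
Import Order.TTheory GRing.Theory Num.Theory.
Local Open Scope ring_scope.

Section Clifford.
Variables (R : realType) (n : nat).

(* Cl_n : elements are families (a_A)_A indexed by subsets A of {e_1,..,e_n};
   generator e_{i+1} corresponds to the ordinal i : 'I_n. *)
Definition Cl := {ffun {set 'I_n} -> R}.

(* sign in e_A e_B = sign A B * e_{A Δ B}, with e_i^2 = -1 *)
Definition clsign (A B : {set 'I_n}) : R :=
  (-1) ^+ (#|[set p : 'I_n * 'I_n | (p.1 \in A) && (p.2 \in B) && (p.2 < p.1)%N]|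
           + #|A :&: B|)%N.

Definition cladd (x y : Cl) : Cl := [ffun A => x A + y A].
Definition clopp (x : Cl) : Cl := [ffun A => - x A].
Definition clsub (x y : Cl) : Cl := cladd x (clopp y).
Definition clscale (r : R) (x : Cl) : Cl := [ffun A => r * x A].

Definition clmul (x y : Cl) : Cl :=
  [ffun C => \sum_(A : {set 'I_n}) \sum_(B : {set 'I_n} | (A :\: B) :|: (B :\: A) == C)
              clsign A B * x A * y B].

Definition clone : Cl := [ffun A => (A == set0)%:R].

Definition clvec (v : 'I_n -> R) : Cl := [ffun A => \sum_(i : 'I_n) (A == [set i])%:R * v i].

(* the last index n (ordinal n-1) *)
Definition is_last (i : 'I_n) : bool := (val i == n.-1)%N.

Definition en : Cl := clvec (fun i => (is_last i)%:R).

Definition upper (v : 'I_n -> R) : Prop := forall i, is_last i -> 0 < v i.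

Definition in_Rn1 (v : 'I_n -> R) : Prop := forall i, is_last i -> v i = 0.

(* hat: the reflection in R^{n-1}; on Cl_n we use its natural extension
   (the automorphism e_n |-> -e_n), which on vectors is y |-> y-hat. *)
Definition clhat (x : Cl) : Cl :=
  [ffun A : {set 'I_n} => if [exists i : 'I_n, (i \in A) && is_last i] then - x A else x A].

(* reversion: e_{j1}...e_{jr} |-> e_{jr}...e_{j1} = (-1)^(r(r-1)/2) e_{j1}...e_{jr} *)
Definition clrev (x : Cl) : Cl := [ffun A : {set 'I_n} => (-1) ^+ 'C(#|A|, 2) * x A].

Definition clnorm (x : Cl) : R := Num.sqrt (\sum_(A : {set 'I_n}) x A ^+ 2).

(* two-sided inverse in Cl_n (arbitrary value if x is not invertible) *)
Definition clinv (x : Cl) : Cl :=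
  epsilon (inhabits clone) (fun y => clmul x y = clone /\ clmul y x = clone).

(* a is a product of vectors of R^{n-1} (the empty product being 1; zero is
   included as a product containing the zero vector) *)
Definition vecprod_Rn1 (a : Cl) : Prop :=
  exists s : seq ('I_n -> R), (forall v, List.In v s -> in_Rn1 v) /\
                              a = foldr clmul clone (map clvec s).

Definition is_vec_Rn1 (x : Cl) : Prop := exists v, in_Rn1 v /\ x = clvec v.

Definition vahlen (a b c d : Cl) : Prop :=
  [/\ vecprod_Rn1 a, vecprod_Rn1 b, vecprod_Rn1 c & vecprod_Rn1 d] /\
  [/\ is_vec_Rn1 (clmul (clrev a) c), is_vec_Rn1 (clmul (clrev c) d),
      is_vec_Rn1 (clmul (clrev d) b) & is_vec_Rn1 (clmul (clrev b) a)] /\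
  (clsub (clmul (clrev a) d) (clmul (clrev b) c) = clone \/
   clsub (clmul (clrev a) d) (clmul (clrev b) c) = clopp clone).

Definition mobius (a b c d : Cl) (x : Cl) : Cl :=
  clmul (cladd (clmul a x) b) (clinv (cladd (clmul c x) d)).

Definition Cxy (x y : Cl) : Cl :=
  clmul (clmul en (clsub x y)) (clinv (clsub x (clhat y))).

End Clifford.

(* Write x' for the Clifford conjugate of x (grade involution composed with
   reversion).  Vectors satisfy x' x = x x' = |x|^2, hence so do products of
   vectors and their inverses; the norm is multiplicative against such elements
   of scalar norm.  The reflection y |-> y-hat is the restriction of the algebra
   automorphism e_n |-> -e_n, which fixes a, b, c, d and therefore commutes
   with psi.  If c = 0 then psi x - psi y = a (x - y) d^-1.  Otherwise
   v = c^-1 d is a vector of R^(n-1) and psi z = a c^-1 + K (z + v)^-1 c^-1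
   with K = b - a v, so psi x - psi y = - K (x + v)^-1 (x - y) (y + v)^-1 c^-1;
   K has scalar norm because rev(c) K = v U - U v - s with U = rev(a) c a vector
   and s = +-1.  In both cases psi x - psi y = P (x - y) Q_y with P and Q_y of
   scalar norm and |Q_(y-hat)| = |Q_y|, and as psi (y-hat) is the reflection of
   psi y, these factors cancel in |C(x, y)| = |e_n| |x - y| / |x - y-hat|. *)

From HB Require Import structures.
From mathcomp Require Import all_boot all_order all_algebra.
From mathcomp Require Import reals boolp.
From mathcomp Require Import ring zify.
From Stdlib Require Import ClassicalEpsilon.
Set Implicit Arguments. Unset Strict Implicit. Unset Printing Implicit Defensive.
Import Order.TTheory GRing.Theory Num.Theory.
Local Open Scope ring_scope.

Lemma signr_eq_odd (R : ringType) (p q : nat) :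
  odd p = odd q -> (-1) ^+ p = (-1) ^+ q :> R.
Proof. by move=> h; rewrite -signr_odd h signr_odd. Qed.

Lemma bin2D (p q : nat) : 'C(p + q, 2) = ('C(p, 2) + 'C(q, 2) + p * q)%N.
Proof.
elim: q => [|q IH]; first by rewrite addn0 muln0 bin0n !addn0.
by rewrite addnS !binS IH !bin1; lia.
Qed.

Lemma bin2_double (p : nat) : (2 * 'C(p, 2) + p = p * p)%N.
Proof. by elim: p => // p IH; rewrite binS bin1; lia. Qed.

Lemma invr_sub (R : unitRingType) (p q : R) :
  p \is a GRing.unit -> q \is a GRing.unit -> p^-1 - q^-1 = p^-1 * (q - p) * q^-1.
Proof. by move=> pU qU; rewrite mulrBr mulrBl mulrK // mulVr // mul1r. Qed.

Section SymmetricDifference.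
Variable T : finType.
Implicit Types A B C : {set T}.

Definition symdiff A B := (A :\: B) :|: (B :\: A).

Lemma in_symdiff A B x : (x \in symdiff A B) = (x \in A) (+) (x \in B).
Proof. by rewrite !inE; case: (x \in A); case: (x \in B). Qed.

Lemma symdiffC A B : symdiff A B = symdiff B A.
Proof. by apply/setP => x; rewrite !in_symdiff addbC. Qed.

Lemma symdiffA A B C : symdiff A (symdiff B C) = symdiff (symdiff A B) C.
Proof. by apply/setP => x; rewrite !in_symdiff addbA. Qed.

Lemma symdiff0s A : symdiff set0 A = A.
Proof. by apply/setP => x; rewrite in_symdiff inE. Qed.

Lemma symdiffs0 A : symdiff A set0 = A.
Proof. by rewrite symdiffC symdiff0s. Qed.

Lemma symdiffss A : symdiff A A = set0.
Proof. by apply/setP => x; rewrite in_symdiff inE addbb. Qed.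

Lemma symdiffK A B : symdiff A (symdiff A B) = B.
Proof. by rewrite symdiffA symdiffss symdiff0s. Qed.

Lemma symdiff_eq A B C : (symdiff A B == C) = (B == symdiff A C).
Proof. by apply/eqP/eqP => [<-|->]; rewrite symdiffK. Qed.

Lemma setI_symdiffl A B C : symdiff A B :&: C = symdiff (A :&: C) (B :&: C).
Proof.
by apply/setP => x; rewrite !(inE, in_symdiff); case: (x \in C); rewrite ?andbT ?andbF.
Qed.

Lemma setI_symdiffr A B C : A :&: symdiff B C = symdiff (A :&: B) (A :&: C).
Proof. by rewrite setIC setI_symdiffl ![_ :&: A]setIC. Qed.

Lemma card_symdiff A B : (#|symdiff A B| + 2 * #|A :&: B| = #|A| + #|B|)%N.
Proof.
have disj : (A :\: B) :&: (B :\: A) = set0.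
  by apply/setP => x; rewrite !inE; case: (x \in A); case: (x \in B).
have := cardsUI (A :\: B) (B :\: A); rewrite disj cards0 addn0 /symdiff => ->.
rewrite !cardsD [B :&: A]setIC.
have := subset_leq_card (subsetIl A B); have := subset_leq_card (subsetIr A B); lia.
Qed.

Lemma signr_symdiff (R : ringType) A B :
  (-1) ^+ #|symdiff A B| = (-1) ^+ #|A| * (-1) ^+ #|B| :> R.
Proof. by rewrite -exprD; apply: signr_eq_odd; have := card_symdiff A B; lia. Qed.

End SymmetricDifference.

Section Inversions.
Variable n : nat.
Implicit Types A B C : {set 'I_n}.

Definition inversions A B :=
  [set p : 'I_n * 'I_n | (p.1 \in A) && (p.2 \in B) && (p.2 < p.1)%N].

Lemma inversions_symdiffl A B C :
  inversions (symdiff A B) C = symdiff (inversions A C) (inversions B C).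
Proof.
apply/setP => p; rewrite in_symdiff !inE.
by case: (p.1 \in A); case: (p.1 \in B); case: (p.2 \in C); case: (p.2 < p.1)%N.
Qed.

Lemma inversions_symdiffr A B C :
  inversions A (symdiff B C) = symdiff (inversions A B) (inversions A C).
Proof.
apply/setP => p; rewrite in_symdiff !inE.
by case: (p.1 \in A); case: (p.2 \in B); case: (p.2 \in C); case: (p.2 < p.1)%N.
Qed.

Lemma card_inversions A B :
  (#|inversions A B| + #|inversions B A| + #|A :&: B| = #|A| * #|B|)%N.
Proof.
pose swap (p : 'I_n * 'I_n) := (p.2, p.1).
have swapK : involutive swap by case.
have diag_inj : injective (fun i : 'I_n => (i, i)) by move=> i j [].
have in_diag (p : 'I_n * 'I_n) :
    (p \in [set (i, i) | i in A :&: B]) = (p.1 \in A :&: B) && (p.1 == p.2).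
  apply/imsetP/andP => [[i iAB ->]|[iAB /eqP]]; first by rewrite eqxx.
  by case: p iAB => i j /= iAB <-; exists i.
have disj_lt_gt : inversions A B :&: swap @: inversions B A = set0.
  apply/setP => p; rewrite (can2_imset_pre _ swapK swapK) !inE.
  by case: ltngtP; rewrite !andbF.
have disj_diag :
    (inversions A B :|: swap @: inversions B A) :&: [set (i, i) | i in A :&: B] = set0.
  apply/setP => [[i j]]; rewrite (can2_imset_pre _ swapK swapK) !(in_diag, inE) /=.
  by case: eqP => [<-|]; rewrite ?ltnn ?andbF.
have partition : setX A B =
    inversions A B :|: swap @: inversions B A :|: [set (i, i) | i in A :&: B].
  apply/setP => [[i j]]; rewrite (can2_imset_pre _ swapK swapK) !(in_diag, inE) /=.
  case: (eqVneq i j) => [<-|]; first by rewrite ltnn; case: (i \in A); case: (i \in B).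
  by rewrite -val_eqE /=; case: ltngtP; case: (i \in A); case: (j \in B); rewrite ?andbF.
rewrite -cardsX partition.
have := cardsUI (inversions A B :|: swap @: inversions B A) [set (i, i) | i in A :&: B].
have := cardsUI (inversions A B) (swap @: inversions B A).
rewrite disj_lt_gt disj_diag (card_imset _ (can_inj swapK)) (card_imset _ diag_inj) !cards0.
by rewrite !addn0 => e ->; rewrite e.
Qed.

End Inversions.

Section CliffordSigns.
Variables (R : realType) (n : nat).
Implicit Types A B C : {set 'I_n}.
Local Notation sg := (@clsign R n).

Lemma clsignE A B : sg A B = (-1) ^+ #|inversions A B| * (-1) ^+ #|A :&: B|.
Proof. exact: exprD. Qed.

Lemma clsign_symdiffl A B C : sg (symdiff A B) C = sg A C * sg B C.
Proof.
by rewrite !clsignE inversions_symdiffl setI_symdiffl !signr_symdiff mulrACA.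
Qed.

Lemma clsign_symdiffr A B C : sg A (symdiff B C) = sg A B * sg A C.
Proof.
by rewrite !clsignE inversions_symdiffr setI_symdiffr !signr_symdiff mulrACA.
Qed.

Lemma clsign_sqr A B : sg A B ^+ 2 = 1.
Proof. by rewrite clsignE exprMn !sqrr_sign mulr1. Qed.

Lemma clsign0l B : sg set0 B = 1.
Proof.
have := clsign_symdiffl set0 set0 B.
by rewrite symdiffss -expr2 clsign_sqr.
Qed.

Lemma clsign0r A : sg A set0 = 1.
Proof.
have := clsign_symdiffr A set0 set0.
by rewrite symdiffss -expr2 clsign_sqr.
Qed.

Lemma clsign_comm A B : sg A B * sg B A = (-1) ^+ (#|A| * #|B| + #|A :&: B|).
Proof.
rewrite !clsignE mulrACA -!exprD [B :&: A]setIC; apply: signr_eq_odd.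
by have := card_inversions A B; lia.
Qed.

Lemma clsign_anticomm A B : odd (#|A| * #|B| + #|A :&: B|) -> sg A B + sg B A = 0.
Proof.
move=> odd_AB; have := clsign_comm A B; rewrite -signr_odd odd_AB expr1 => comm.
by rewrite -[sg A B]mulr1 -(clsign_sqr B A) expr2 mulrA comm mulN1r addNr.
Qed.

Lemma clsign_diag A : sg A A = (-1) ^+ ('C(#|A|, 2) + #|A|).
Proof.
rewrite /clsign -/(inversions A A) setIid; congr (_ ^+ (_ + _)).
by have := card_inversions A A; have := bin2_double #|A|; rewrite setIid; lia.
Qed.

End CliffordSigns.

Section CliffordAlgebra.
Variables (R : realType) (n : nat).
Local Notation Cl := (Cl R n).
Implicit Types (x y z : Cl) (A B C : {set 'I_n}).
Local Notation sg := (@clsign R n).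

Lemma clmul_coef x y C :
  clmul x y C = \sum_A sg A (symdiff A C) * x A * y (symdiff A C).
Proof.
rewrite ffunE; apply: eq_bigr => A _.
by rewrite (big_pred1 (symdiff A C)) // => B; rewrite /= symdiff_eq.
Qed.

Lemma clmulA : associative (@clmul R n).
Proof.
move=> x y z; apply/esym/ffunP => D; rewrite !clmul_coef.
under eq_bigr do rewrite clmul_coef big_distrr big_distrl /=.
rewrite exchange_big /=; apply: eq_bigr => A _.
rewrite clmul_coef big_distrr /= (reindex_inj (can_inj (symdiffK A))) /=.
apply: eq_bigr => B _.
rewrite symdiffK !symdiffA [symdiff B A]symdiffC.
rewrite !(clsign_symdiffl, clsign_symdiffr) -[RHS]mulr1 -(clsign_sqr R A B).
ring.
Qed.

Lemma clmul1l : left_id (@clone R n) (@clmul R n).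
Proof.
move=> x; apply/ffunP => C; rewrite clmul_coef (bigD1 set0) //= big1 => [|A nzA].
  by rewrite ffunE eqxx clsign0l symdiff0s !mul1r addr0.
by rewrite ffunE (negbTE nzA) mulr0 mul0r.
Qed.

Lemma clmul1r : right_id (@clone R n) (@clmul R n).
Proof.
move=> x; apply/ffunP => C; rewrite clmul_coef (bigD1 C) //= big1 => [|A neqAC].
  by rewrite symdiffss ffunE eqxx clsign0r !mulr1 mul1r addr0.
by rewrite ffunE symdiff_eq symdiffs0 eq_sym (negbTE neqAC) mulr0.
Qed.

Lemma clmulDl : left_distributive (@clmul R n) +%R.
Proof.
move=> x y z; apply/ffunP => C; rewrite [RHS]ffunE !clmul_coef -big_split /=.
by apply: eq_bigr => A _; rewrite ffunE; ring.
Qed.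

Lemma clmulDr : right_distributive (@clmul R n) +%R.
Proof.
move=> x y z; apply/ffunP => C; rewrite [RHS]ffunE !clmul_coef -big_split /=.
by apply: eq_bigr => A _; rewrite ffunE; ring.
Qed.

Lemma clone_neq0 : @clone R n != 0.
Proof. by apply/eqP => /ffunP/(_ set0)/eqP; rewrite !ffunE eqxx oner_eq0. Qed.

(* [{ffun _ -> R}] already carries the pointwise product; these instances,
   keyed on [Cl], equip it with the Clifford product instead. *)
HB.instance Definition _ := GRing.Lmodule.copy Cl {ffun {set 'I_n} -> R^o}.
HB.instance Definition _ := GRing.Zmodule_isNzRing.Build Cl
  clmulA clmul1l clmul1r clmulDl clmulDr clone_neq0.

Lemma clmulE x y C :
  (x * y) C = \sum_A sg A (symdiff A C) * x A * y (symdiff A C).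
Proof. exact: clmul_coef. Qed.

Lemma clcoefZ k x A : (k *: x) A = k * x A.
Proof. by rewrite ffunE. Qed.

Lemma clscalerAl k x y : k *: (x * y) = k *: x * y.
Proof.
apply/ffunP => C; rewrite clcoefZ !clmulE big_distrr.
by apply: eq_bigr => A _; rewrite clcoefZ /=; ring.
Qed.

Lemma clscalerAr k x y : k *: (x * y) = x * (k *: y).
Proof.
apply/ffunP => C; rewrite clcoefZ !clmulE big_distrr.
by apply: eq_bigr => A _; rewrite clcoefZ /=; ring.
Qed.

HB.instance Definition _ := GRing.Lmodule_isLalgebra.Build R Cl clscalerAl.
HB.instance Definition _ := GRing.Lalgebra_isAlgebra.Build R Cl clscalerAr.

(* [clinv] is an arbitrary choice off the units, where [GRing.inv] must be the
   identity. *)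
Definition clunit : pred Cl := fun x => `[< exists y, y * x = 1 /\ x * y = 1 >].
Definition clinvr x := if x \in clunit then clinv x else x.

Lemma clinv_spec x : x \in clunit -> x * clinv x = 1 /\ clinv x * x = 1.
Proof.
move/asboolP => [y [yx xy]].
by apply: (epsilon_spec (inhabits 1) (fun y => x * y = 1 /\ y * x = 1)); exists y.
Qed.

Lemma clmulVr : {in clunit, left_inverse 1 clinvr *%R}.
Proof. by move=> x ux; rewrite /clinvr ux; case: (clinv_spec ux). Qed.

Lemma clmulrV : {in clunit, right_inverse 1 clinvr *%R}.
Proof. by move=> x ux; rewrite /clinvr ux; case: (clinv_spec ux). Qed.

Lemma clunitP x y : y * x = 1 /\ x * y = 1 -> x \in clunit.
Proof. by move=> inv_xy; apply/asboolP; exists y. Qed.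

Lemma clinvr_out : {in [predC clunit], clinvr =1 id}.
Proof. by move=> x /negbTE nux; rewrite /clinvr nux. Qed.

HB.instance Definition _ := GRing.NzRing_hasMulInverse.Build Cl
  clmulVr clmulrV clunitP clinvr_out.

Lemma clmulr : @clmul R n = *%R. Proof. by []. Qed.
Lemma claddr : @cladd R n = +%R. Proof. by []. Qed.
Lemma clsubr x y : clsub x y = x - y. Proof. by []. Qed.

Lemma clinvE x : x \is a GRing.unit -> clinv x = x^-1.
Proof. by move=> ux; rewrite /GRing.inv /= /clinvr ux. Qed.

Lemma clcoefD x y A : (x + y) A = x A + y A.
Proof. by rewrite !ffunE. Qed.

Lemma clcoefB x y A : (x - y) A = x A - y A.
Proof. by rewrite !ffunE. Qed.

Lemma clcoef_alg k A : (k%:A : Cl) A = k * (A == set0)%:R.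
Proof. by rewrite !ffunE. Qed.

Lemma clalg_eq0 k : (k%:A == 0 :> Cl) = (k == 0).
Proof.
apply/eqP/eqP => [/(congr1 (fun g : Cl => g set0))|->]; last by rewrite scale0r.
by rewrite clcoef_alg eqxx mulr1 ffunE.
Qed.


End CliffordAlgebra.

Section Involutions.
Variables (R : realType) (n : nat).
Local Notation Cl := (Cl R n).
Local Notation sg := (@clsign R n).
Implicit Types (x y z : Cl) (A B C L : {set 'I_n}).

Definition cltwist L x : Cl := [ffun A => (-1) ^+ #|A :&: L| * x A].
Local Notation clgrade := (cltwist setT).

Fact cltwist_is_linear L : linear (cltwist L).
Proof. by move=> k x y; apply/ffunP => A; rewrite !(clcoefZ, ffunE); ring. Qed.

Fact cltwist_is_monoid_morphism L : monoid_morphism (cltwist L).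
Proof.
split=> [|x y]; apply/ffunP => C.
  by rewrite !ffunE; case: eqP => [->|]; rewrite ?set0I ?cards0 ?mulr0 ?mulr1.
rewrite [LHS]ffunE !clmulE big_distrr /=; apply: eq_bigr => A _.
rewrite !ffunE setI_symdiffl signr_symdiff.
have := sqrr_sign R #|A :&: L|; set s := _ ^+ #|A :&: L| => s2.
by rewrite -[LHS]mul1r -s2; ring.
Qed.

HB.instance Definition _ L := GRing.isLinear.Build R Cl Cl *:%R (cltwist L)
  (cltwist_is_linear L).
HB.instance Definition _ L := GRing.isMonoidMorphism.Build Cl Cl (cltwist L)
  (cltwist_is_monoid_morphism L).

Lemma cltwistK L : involutive (cltwist L).
Proof. by move=> x; apply/ffunP => A; rewrite !ffunE mulrA -expr2 sqrr_sign mul1r. Qed.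

Lemma clnorm_twist L x : clnorm (cltwist L x) = clnorm x.
Proof.
by congr Num.sqrt; apply: eq_bigr => A _; rewrite ffunE exprMn sqrr_sign mul1r.
Qed.

Fact clrev_is_linear : linear (@clrev R n).
Proof. by move=> k x y; apply/ffunP => A; rewrite !(clcoefZ, ffunE); ring. Qed.

HB.instance Definition _ := GRing.isLinear.Build R Cl Cl *:%R (@clrev R n)
  clrev_is_linear.

Lemma clsign_rev A B :
  (-1) ^+ 'C(#|symdiff A B|, 2) * sg A B =
  sg B A * (-1) ^+ 'C(#|A|, 2) * (-1) ^+ 'C(#|B|, 2).
Proof.
rewrite !clsignE [B :&: A]setIC -!exprD; apply: signr_eq_odd.
have e : (#|symdiff A B| + (#|A :&: B| + #|A :&: B|) = #|A| + #|B|)%N.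
  by have := card_symdiff A B; lia.
have := bin2D #|symdiff A B| (#|A :&: B| + #|A :&: B|); rewrite e mulnDr.
have := bin2D #|A| #|B|; have := bin2D #|A :&: B| #|A :&: B|.
have := bin2_double #|A :&: B|; have := card_inversions A B; lia.
Qed.

Lemma clrevM x y : clrev (x * y) = clrev y * clrev x.
Proof.
apply/ffunP => C; rewrite ffunE !clmulE big_distrr /=.
rewrite (reindex_inj (can_inj (symdiffK C))); apply: eq_bigr => A _ /=.
rewrite !ffunE [symdiff C A]symdiffC -symdiffA symdiffss symdiffs0.
have := clsign_rev (symdiff A C) A.
rewrite [symdiff (symdiff A C) A]symdiffC symdiffK => sign_eq.
by rewrite !mulrA sign_eq; ring.
Qed.

Lemma clrev1 : clrev 1 = 1 :> Cl.
Proof.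
by apply/ffunP => A; rewrite !ffunE; case: eqP => [->|]; rewrite ?cards0 ?mulr0 ?mulr1.
Qed.

Lemma clrevK : involutive (@clrev R n).
Proof. by move=> x; apply/ffunP => A; rewrite !ffunE mulrA -expr2 sqrr_sign mul1r. Qed.

Lemma clrev_twist L x : clrev (cltwist L x) = cltwist L (clrev x).
Proof. by apply/ffunP => A; rewrite !ffunE mulrCA. Qed.

Definition clconj x := clgrade (clrev x).

Fact clconj_is_linear : linear clconj.
Proof. by move=> k x y; rewrite /clconj !linearP. Qed.

HB.instance Definition _ := GRing.isLinear.Build R Cl Cl *:%R clconj
  clconj_is_linear.

Lemma clconjM x y : clconj (x * y) = clconj y * clconj x.
Proof. by rewrite /clconj clrevM rmorphM. Qed.

Lemma clconjK : involutive clconj.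
Proof. by move=> x; rewrite /clconj clrev_twist clrevK cltwistK. Qed.

Lemma clconj1 : clconj 1 = 1.
Proof. by rewrite /clconj clrev1 rmorph1. Qed.

Lemma clconj_alg k : clconj k%:A = k%:A.
Proof. by rewrite linearZ /= clconj1. Qed.

Lemma clnorm_sqr x : clnorm x ^+ 2 = (clconj x * x) set0.
Proof.
rewrite sqr_sqrtr ?sumr_ge0 // => [|A _]; last exact: sqr_ge0.
rewrite clmulE; apply: eq_bigr => A _.
rewrite symdiffs0 !ffunE setIT clsign_diag !mulrA -!exprD.
by rewrite (@signr_eq_odd _ _ 0) ?mul1r ?expr2 //; lia.
Qed.

Lemma clmul_set0C x y : (x * y) set0 = (y * x) set0.
Proof. by rewrite !clmulE; apply: eq_bigr => A _; rewrite symdiffs0; ring. Qed.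

Lemma clnorm_ge0 x : 0 <= clnorm x.
Proof. exact: sqrtr_ge0. Qed.

Lemma clnorm_eq0 x : (clnorm x == 0) = (x == 0).
Proof.
have sqr_ge0' A : 0 <= x A ^+ 2 by exact: sqr_ge0.
rewrite /clnorm sqrtr_eq0 le_eqVlt ltNge sumr_ge0 // orbF psumr_eq0 //.
apply/allP/eqP => [x0|-> A _]; last by rewrite ffunE expr2 mulr0 eqxx.
by apply/ffunP => A; rewrite ffunE; apply/eqP; rewrite -sqrf_eq0; apply: x0.
Qed.

Lemma clnorm0 : clnorm (0 : Cl) = 0.
Proof. by apply/eqP; rewrite clnorm_eq0. Qed.

End Involutions.

Notation clgrade := (cltwist setT).

Section ScalarNorm.
Variables (R : realType) (n : nat).
Local Notation Cl := (Cl R n).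
Implicit Types (g h x y z : Cl).

Lemma clnormE x : clnorm x = Num.sqrt ((clconj x * x) set0).
Proof. by rewrite -clnorm_sqr sqrtr_sqr ger0_norm // sqrtr_ge0. Qed.

Lemma clnorm1 : clnorm (1 : Cl) = 1.
Proof. by rewrite clnormE clconj1 mulr1 !ffunE eqxx sqrtr1. Qed.

Definition has_scalar_norm g :=
  exists k : R, clconj g * g = k%:A /\ g * clconj g = k%:A.

Lemma scalar_normP g : has_scalar_norm g ->
  clconj g * g = (clnorm g ^+ 2)%:A /\ g * clconj g = (clnorm g ^+ 2)%:A.
Proof.
by move=> [k [gk kg]]; rewrite clnorm_sqr gk clcoef_alg eqxx mulr1.
Qed.

Lemma clnormMl g z : has_scalar_norm g -> clnorm (g * z) = clnorm g * clnorm z.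
Proof.
move=> /scalar_normP[gg _]; rewrite [LHS]clnormE clconjM -mulrA (mulrA (clconj g)).
rewrite gg mulr_algl -scalerAr clcoefZ sqrtrM ?sqr_ge0 // -clnormE.
by rewrite sqrtr_sqr ger0_norm ?clnorm_ge0.
Qed.

Lemma clnormMr g z : has_scalar_norm g -> clnorm (z * g) = clnorm z * clnorm g.
Proof.
move=> /scalar_normP[_ gg]; rewrite [LHS]clnormE clconjM clmul_set0C !mulrA.
rewrite -(mulrA _ g) gg mulr_algr -scalerAl clcoefZ clmul_set0C sqrtrM ?sqr_ge0 //.
by rewrite -clnormE sqrtr_sqr ger0_norm ?clnorm_ge0 // mulrC.
Qed.

Lemma has_scalar_norm_alg k : has_scalar_norm k%:A.
Proof. by exists (k * k); rewrite clconj_alg mulr_algl scalerA. Qed.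

Lemma has_scalar_norm1 : has_scalar_norm 1.
Proof. by have := has_scalar_norm_alg 1; rewrite scale1r. Qed.

Lemma has_scalar_normM g h :
  has_scalar_norm g -> has_scalar_norm h -> has_scalar_norm (g * h).
Proof.
move=> [k [gk kg]] [l [hl lh]]; exists (k * l); rewrite clconjM; split.
  by rewrite -mulrA (mulrA (clconj g)) gk mulr_algl -scalerAr hl scalerA mulrC.
by rewrite -mulrA (mulrA h) lh mulr_algl -scalerAr kg scalerA mulrC.
Qed.

Lemma has_scalar_normZ k g : has_scalar_norm g -> has_scalar_norm (k *: g).
Proof.
by move=> gn; rewrite -mulr_algl; apply: has_scalar_normM gn; exact: has_scalar_norm_alg.
Qed.

Lemma has_scalar_norm_conj g : has_scalar_norm g -> has_scalar_norm (clconj g).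
Proof. by move=> [k [gk kg]]; exists k; rewrite clconjK. Qed.

Lemma scalar_norm_inverse g : has_scalar_norm g -> g != 0 ->
  let g' := (clnorm g ^+ 2)^-1 *: clconj g in g' * g = 1 /\ g * g' = 1.
Proof.
move=> /scalar_normP[gg gg'] g0 /=; have n0 : clnorm g ^+ 2 != 0.
  by rewrite sqrf_eq0 clnorm_eq0.
by rewrite -scalerAl -scalerAr gg gg' !scalerA mulVf // scale1r.
Qed.

Lemma scalar_norm_unit g : has_scalar_norm g -> (g \is a GRing.unit) = (g != 0).
Proof.
move=> gn; apply/idP/idP => [|g0]; first by apply: contraTneq => ->; rewrite unitr0.
by apply/unitrP; eexists; exact: scalar_norm_inverse.
Qed.

Lemma scalar_norm_invE g :
  has_scalar_norm g -> g != 0 -> g^-1 = (clnorm g ^+ 2)^-1 *: clconj g.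
Proof.
move=> gn g0; have [inv_l _] := scalar_norm_inverse gn g0.
by rewrite -[LHS]mul1r -inv_l -mulrA mulrV ?mulr1 ?scalar_norm_unit.
Qed.

Lemma has_scalar_normV g : has_scalar_norm g -> has_scalar_norm g^-1.
Proof.
move=> gn; have [g0|g0] := eqVneq g 0; first by rewrite g0 invr0 -g0.
by rewrite scalar_norm_invE //; apply/has_scalar_normZ/has_scalar_norm_conj.
Qed.

Lemma clnormV g : has_scalar_norm g -> clnorm g^-1 = (clnorm g)^-1.
Proof.
move=> gn; have [->|g0] := eqVneq g 0.
  by rewrite invr0 clnorm0 invr0.
have := congr1 (@clnorm R n) (mulrV (_ : g \is a GRing.unit)).
rewrite clnormMl // clnorm1 scalar_norm_unit // => /(_ g0) prod1.
by rewrite -[LHS]mul1r -(mulVf (_ : clnorm g != 0)) ?clnorm_eq0 // -mulrA prod1 mulr1.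
Qed.

Definition sn_invertible g := has_scalar_norm g /\ g != 0.

Lemma sn_invertible_unit g : sn_invertible g -> g \is a GRing.unit.
Proof. by move=> [gn g0]; rewrite scalar_norm_unit. Qed.

Lemma sn_invertibleM g h :
  sn_invertible g -> sn_invertible h -> sn_invertible (g * h).
Proof.
move=> gi hi; split; first by apply: has_scalar_normM; [case: gi | case: hi].
by rewrite -(scalar_norm_unit (has_scalar_normM gi.1 hi.1)) unitrMr ?sn_invertible_unit.
Qed.

Lemma sn_invertibleV g : sn_invertible g -> sn_invertible g^-1.
Proof.
move=> gi; split; first exact/has_scalar_normV/gi.1.
by rewrite -scalar_norm_unit ?unitrV ?sn_invertible_unit //; apply/has_scalar_normV/gi.1.
Qed.

Lemma sn_invertibleN g : sn_invertible g -> sn_invertible (- g).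
Proof.
move=> [gn g0]; rewrite -scaleN1r; split; first exact: has_scalar_normZ.
by rewrite scaleN1r oppr_eq0.
Qed.

End ScalarNorm.

Section Vectors.
Variables (R : realType) (n : nat).
Local Notation Cl := (Cl R n).
Local Notation sg := (@clsign R n).
Implicit Types (x y z : Cl) (A B C L : {set 'I_n}).

Definition is_clvec x := forall A, #|A| != 1%N -> x A = 0.

Lemma is_clvec_clvec (v : 'I_n -> R) : is_clvec (clvec v).
Proof.
move=> A A1; rewrite ffunE big1 // => i _.
by case: eqP => [Ai|_]; [rewrite Ai cards1 in A1 | rewrite mul0r].
Qed.

Lemma is_clvecD x y : is_clvec x -> is_clvec y -> is_clvec (x + y).
Proof. by move=> xv yv A A1; rewrite ffunE xv ?yv ?addr0. Qed.

Lemma is_clvecN x : is_clvec x -> is_clvec (- x).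
Proof. by move=> xv A A1; rewrite ffunE xv ?oppr0. Qed.

Lemma is_clvecB x y : is_clvec x -> is_clvec y -> is_clvec (x - y).
Proof. by move=> xv yv; apply/is_clvecD/is_clvecN. Qed.

Lemma is_clvecZ k x : is_clvec x -> is_clvec (k *: x).
Proof. by move=> xv A A1; rewrite clcoefZ xv ?mulr0. Qed.

Lemma is_clvec_twist L x : is_clvec x -> is_clvec (cltwist L x).
Proof. by move=> xv A A1; rewrite ffunE xv ?mulr0. Qed.

Lemma clrev_vec x : is_clvec x -> clrev x = x.
Proof.
move=> xv; apply/ffunP => A; rewrite ffunE.
by have [A1|A1] := eqVneq #|A| 1%N; rewrite ?A1 ?mul1r // xv ?mulr0.
Qed.

Lemma clgrade_vec x : is_clvec x -> clgrade x = - x.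
Proof.
move=> xv; apply/ffunP => A; rewrite !ffunE setIT.
by have [A1|A1] := eqVneq #|A| 1%N; rewrite ?A1 ?mulN1r // xv ?mulr0 ?oppr0.
Qed.

Lemma clconj_vec x : is_clvec x -> clconj x = - x.
Proof. by move=> xv; rewrite /clconj clrev_vec // clgrade_vec. Qed.

Lemma clvec_anticomm x y :
  is_clvec x -> is_clvec y -> exists k, x * y + y * x = k%:A.
Proof.
move=> xv yv; exists ((x * y + y * x) set0); apply/ffunP => C.
rewrite clcoef_alg; have [->|C0] := eqVneq C set0; first by rewrite mulr1.
rewrite mulr0 [LHS]ffunE !clmulE (reindex_inj (can_inj (symdiffK C))) -big_split.
apply: big1 => A _ /=; rewrite [symdiff C A]symdiffC -symdiffA symdiffss symdiffs0.
set B := symdiff A C.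
have [A1|A1] := eqVneq #|A| 1%N; last by rewrite yv // !(mulr0, mul0r) addr0.
have [B1|B1] := eqVneq #|B| 1%N; last by rewrite xv // !(mulr0, mul0r) addr0.
rewrite [sg A B * _ * _]mulrAC -!mulrDl clsign_anticomm ?mul0r //.
have := card_symdiff B A; rewrite A1 B1 [symdiff B A]symdiffC /B symdiffK.
by move: C0; rewrite -card_gt0; lia.
Qed.

Lemma has_scalar_norm_vec x : is_clvec x -> has_scalar_norm x.
Proof.
move=> xv; have [k xxk] := clvec_anticomm xv xv.
have xx : x * x = (k / 2)%:A.
  rewrite [k / 2]mulrC -scalerA -xxk -mulr2n -scaler_nat scalerA.
  by rewrite mulVf ?pnatr_eq0 // scale1r.
by exists (- (k / 2)); rewrite clconj_vec // mulNr mulrN xx scaleNr.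
Qed.

Lemma vecprodE (s : seq ('I_n -> R)) :
  foldr (@clmul R n) 1 (map (@clvec R n) s) = \prod_(v <- s) clvec v.
Proof. by elim: s => [|v s IH]; rewrite ?big_nil ?big_cons //= IH. Qed.

Lemma has_scalar_norm_vecprod (s : seq ('I_n -> R)) :
  has_scalar_norm (\prod_(v <- s) clvec v).
Proof.
apply: big_ind => [|g h|v _]; [exact: has_scalar_norm1 | exact: has_scalar_normM |].
exact/has_scalar_norm_vec/is_clvec_clvec.
Qed.

Lemma clgrade_vecprod (s : seq ('I_n -> R)) :
  clgrade (\prod_(v <- s) clvec v) = (-1) ^+ size s *: \prod_(v <- s) clvec v.
Proof.
elim: s => [|v s IH]; first by rewrite !big_nil rmorph1 scale1r.
rewrite !big_cons rmorphM /= IH (clgrade_vec (is_clvec_clvec v)).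
by rewrite -scalerAr mulNr scalerN exprS mulN1r scaleNr.
Qed.

Lemma clvec_coef (v : 'I_n -> R) i : clvec v [set i] = v i.
Proof.
rewrite ffunE (bigD1 i) //= eqxx mul1r big1 ?addr0 // => j ji.
rewrite (_ : [set i] == [set j] = false) ?mul0r //.
by apply/negbTE; rewrite eqEcard !sub1set !inE eq_sym (negbTE ji).
Qed.

Lemma clvec_sn_invertible x : is_clvec x -> x != 0 -> sn_invertible x.
Proof. by move=> xv x0; split; first exact: has_scalar_norm_vec. Qed.

(* As w u + u w is a scalar m, the element is u ((m - s) u^-1 - 2 w), a product
   of two vectors. *)
Lemma sn_invertible_commutator u w s :
  is_clvec u -> is_clvec w -> s != 0 -> sn_invertible (w * u - u * w - s%:A).
Proof.
move=> uv wv s0; split; last first.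
  apply: contra_neq s0 => /(congr1 (fun g : Cl => g set0)).
  rewrite !clcoefB clmul_set0C subrr sub0r clcoef_alg eqxx mulr1 => /eqP.
  by rewrite ffunE oppr_eq0 => /eqP.
have [->|u0] := eqVneq u 0.
  by rewrite mulr0 mul0r subrr sub0r -scaleNr; exact: has_scalar_norm_alg.
have [m wum] := clvec_anticomm wv uv; have ui := clvec_sn_invertible uv u0.
have -> : w * u - u * w - s%:A = u * ((m - s) *: u^-1 - 2 *: w).
  rewrite mulrBr -!scalerAr mulrV ?sn_invertible_unit // scalerBl.
  rewrite -(addrK (u * w) (w * u)) wum scaler_nat mulr2n opprD addrA.
  by rewrite addrAC; congr (_ - _); rewrite addrAC.
apply: has_scalar_normM; first exact: has_scalar_norm_vec.
apply/has_scalar_norm_vec/is_clvecB; apply: is_clvecZ => //.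
rewrite (scalar_norm_invE ui.1 u0) (clconj_vec uv).
exact/is_clvecZ/is_clvecN.
Qed.

Lemma clrev_parity x k :
  clgrade x = (-1) ^+ k *: x -> clrev x = (-1) ^+ k *: clconj x.
Proof.
move=> xk; rewrite /clconj -clrev_twist xk linearZ /= scalerA.
by rewrite -expr2 sqrr_sign scale1r.
Qed.

End Vectors.

Section Reflection.
Variables (R : realType) (n : nat).
Local Notation Cl := (Cl R n).
Implicit Types (x y X Y : Cl).

Lemma clhatE x : clhat x = cltwist [set i | is_last i] x.
Proof.
apply/ffunP => A; rewrite !ffunE; case: existsP => [[i /andP[iA li]]|no_last].
  suff -> : A :&: [set i | is_last i] = [set i] by rewrite cards1 mulN1r.
  apply/setP => j; rewrite !inE; apply/andP/eqP => [[jA lj]|->]; last by rewrite iA.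
  by apply/val_inj; move: li lj; rewrite /is_last => /eqP -> /eqP ->.
suff -> : A :&: [set i | is_last i] = set0 by rewrite cards0 mul1r.
by apply/setP => j; rewrite !inE; apply/negP => jAl; apply: no_last; exists j.
Qed.

Lemma clhatD x y : clhat (x + y) = clhat x + clhat y.
Proof. by rewrite !clhatE rmorphD. Qed.

Lemma clhatM x y : clhat (x * y) = clhat x * clhat y.
Proof. by rewrite !clhatE rmorphM. Qed.

Lemma clhatV x : x \is a GRing.unit -> clhat x^-1 = (clhat x)^-1.
Proof. by move=> xU; rewrite !clhatE rmorphV. Qed.

Lemma clnorm_hat x : clnorm (clhat x) = clnorm x.
Proof. by rewrite clhatE clnorm_twist. Qed.

Lemma clnorm_Cxy X Y : sn_invertible (X - clhat Y) ->
  clnorm (Cxy X Y) = clnorm (en R n) * clnorm (X - Y) / clnorm (X - clhat Y).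
Proof.
move=> [XYn XY0]; have en_n : has_scalar_norm (en R n).
  exact/has_scalar_norm_vec/is_clvec_clvec.
rewrite /Cxy clmulr !clsubr clinvE ?scalar_norm_unit //.
by rewrite (clnormMr _ (has_scalar_normV XYn)) (clnormV XYn) (clnormMl _ en_n).
Qed.

Lemma clnorm_Cxy_factor X Y x y P Q Q' :
  X - Y = P * (x - y) * Q -> X - clhat Y = P * (x - clhat y) * Q' ->
  sn_invertible P -> sn_invertible Q -> sn_invertible Q' ->
  sn_invertible (x - clhat y) -> clnorm Q' = clnorm Q ->
  clnorm (Cxy X Y) = clnorm (Cxy x y).
Proof.
move=> XY XY' Pi Qi Q'i xyi normQ.
have XYi : sn_invertible (X - clhat Y).
  by rewrite XY'; apply: sn_invertibleM => //; exact: sn_invertibleM.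
rewrite !clnorm_Cxy // XY XY'.
rewrite (clnormMr _ Qi.1) (clnormMr _ Q'i.1) !(clnormMl _ Pi.1) normQ.
have nP : clnorm P != 0 by rewrite clnorm_eq0; case: Pi.
have nQ : clnorm Q != 0 by rewrite clnorm_eq0; case: Qi.
have nxy : clnorm (x - clhat y) != 0 by rewrite clnorm_eq0; case: xyi.
by field; rewrite nP nQ nxy.
Qed.

End Reflection.

Section Hyperplane.
Variables (R : realType) (n : nat) (l : 'I_n).
Hypothesis l_last : is_last l.
Local Notation Cl := (Cl R n).
Implicit Types (x y z w : Cl).

Definition off_hyperplane z := is_clvec z /\ z [set l] != 0.

Lemma lastsetE : [set i | is_last i] = [set l].
Proof.
apply/setP => i; rewrite !inE; apply/idP/eqP => [li|->//].
by apply/val_inj; move: li l_last; rewrite /is_last => /eqP -> /eqP ->.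
Qed.

Lemma clhat_last x : clhat x [set l] = - x [set l].
Proof. by rewrite clhatE lastsetE ffunE setIid cards1 mulN1r. Qed.

Lemma clhat_hyperplane x : is_clvec x -> x [set l] = 0 -> clhat x = x.
Proof.
move=> xv xl; apply/ffunP => A; rewrite clhatE lastsetE ffunE.
have [lA|lA] := boolP (l \in A).
  have [/cards1P[i Ai]|A1] := boolP (#|A| == 1%N); last by rewrite xv ?mulr0.
  by move: lA; rewrite Ai inE => /eqP <-; rewrite xl mulr0.
suff -> : A :&: [set l] = set0 by rewrite cards0 mul1r.
by apply/setP => i; rewrite !inE andbC; case: eqP => //= ->; exact: negbTE.
Qed.

Lemma off_hyperplane_hat z : off_hyperplane z -> off_hyperplane (clhat z).
Proof.
move=> [zv z0]; split; last by rewrite clhat_last oppr_eq0.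
by rewrite clhatE; exact: is_clvec_twist.
Qed.

Lemma off_hyperplane_shift z w :
  off_hyperplane z -> is_clvec w -> w [set l] = 0 -> off_hyperplane (z + w).
Proof. by move=> [zv z0] wv wl; split; [exact: is_clvecD | rewrite clcoefD wl addr0]. Qed.

Lemma off_hyperplane_sn z : off_hyperplane z -> sn_invertible z.
Proof.
move=> [zv z0]; apply: clvec_sn_invertible zv _.
by apply: contra_neq z0 => ->; rewrite ffunE.
Qed.

Lemma upper_off_hyperplane (v : 'I_n -> R) : upper v -> off_hyperplane (clvec v).
Proof. by move=> uv; split; [exact: is_clvec_clvec | rewrite clvec_coef gt_eqF ?uv]. Qed.

Lemma upper_sub_hat (x y : 'I_n -> R) : upper x -> upper y ->
  sn_invertible (clvec x - clhat (clvec y)).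
Proof.
move=> ux uy; apply: off_hyperplane_sn; split.
  rewrite clhatE; apply: is_clvecB; first exact: is_clvec_clvec.
  exact/is_clvec_twist/is_clvec_clvec.
by rewrite clcoefB clhat_last opprK !clvec_coef gt_eqF // addr_gt0 ?ux ?uy.
Qed.

Lemma is_vec_Rn1_hyperplane x : is_vec_Rn1 x -> is_clvec x /\ x [set l] = 0.
Proof.
by move=> [v [vRn1 ->]]; split; [exact: is_clvec_clvec | rewrite clvec_coef vRn1].
Qed.

Lemma clhat_vecprod_Rn1 x : vecprod_Rn1 x -> clhat x = x.
Proof.
move=> [s [sRn1 ->]]; rewrite vecprodE.
elim: s sRn1 => [|v s IH] sRn1; first by rewrite big_nil clhatE rmorph1.
rewrite big_cons clhatM IH => [|w sw]; last by apply: sRn1; right.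
rewrite clhat_hyperplane ?clvec_coef ?(sRn1 v (or_introl erefl)) //.
exact: is_clvec_clvec.
Qed.

End Hyperplane.

Lemma has_scalar_norm_vecprod_Rn1 (R : realType) (n : nat) (x : Cl R n) :
  vecprod_Rn1 x -> has_scalar_norm x.
Proof. by move=> [s [_ ->]]; rewrite vecprodE; exact: has_scalar_norm_vecprod. Qed.

Lemma clgrade_vecprod_Rn1 (R : realType) (n : nat) (x : Cl R n) :
  vecprod_Rn1 x -> exists k, clgrade x = (-1) ^+ k *: x.
Proof. by move=> [s [_ ->]]; rewrite vecprodE; exists (size s); exact: clgrade_vecprod. Qed.

Section Mobius.
Variables (R : realType) (n : nat) (l : 'I_n) (a b c d : Cl R n).
Hypotheses (l_last : is_last l) (hpsi : vahlen a b c d).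
Local Notation Cl := (Cl R n).
Local Notation psi := (mobius a b c d).
Local Notation off_hyperplane := (off_hyperplane l).
Implicit Types (x y z : Cl).

Lemma vahlen_hat : [/\ clhat a = a, clhat b = b, clhat c = c & clhat d = d].
Proof. by case: hpsi => -[] /(clhat_vecprod_Rn1 l_last) ? /(clhat_vecprod_Rn1 l_last) ?
  /(clhat_vecprod_Rn1 l_last) ? /(clhat_vecprod_Rn1 l_last) ? _. Qed.

Lemma vahlen_norm : [/\ has_scalar_norm a, has_scalar_norm c & has_scalar_norm d].
Proof.
by case: hpsi => -[] /has_scalar_norm_vecprod_Rn1 ? _ /has_scalar_norm_vecprod_Rn1 ?
  /has_scalar_norm_vecprod_Rn1 ? _.
Qed.

Lemma vahlen_clrev_c : exists k, clrev c = (-1) ^+ k *: clconj c.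
Proof.
by have [_ _ /clgrade_vecprod_Rn1[k ck] _] := hpsi.1; exists k; exact: clrev_parity.
Qed.

Lemma vahlen_det : exists2 s : R, s != 0 & clrev a * d - clrev b * c = s%:A.
Proof.
case: hpsi => _ [_]; rewrite clsubr => -[] ->.
  by exists 1; rewrite ?oner_eq0 ?scale1r.
by exists (-1); rewrite ?oppr_eq0 ?oner_eq0 // scaleN1r.
Qed.

Section AffineCase.
Hypothesis c_eq0 : c = 0.

Lemma vahlen_affine_sn : sn_invertible a /\ sn_invertible d.
Proof.
have [s s0] := vahlen_det; rewrite c_eq0 mulr0 subr0 => ad.
have ad0 : clrev a * d != 0 by rewrite ad clalg_eq0.
have [an _ dn] := vahlen_norm; split; split => //; apply: contraNneq ad0 => ->.
  by rewrite linear0 mul0r.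
by rewrite mulr0.
Qed.

Lemma mobius_affine z : psi z = (a * z + b) * d^-1.
Proof.
rewrite /mobius clmulr claddr c_eq0 mul0r add0r clinvE //.
exact: sn_invertible_unit (vahlen_affine_sn).2.
Qed.

Lemma mobius_sub_affine x y : psi x - psi y = a * (x - y) * d^-1.
Proof. by rewrite !mobius_affine -mulrBl opprD addrACA subrr addr0 -mulrBr. Qed.

End AffineCase.

Section ProperCase.
Hypothesis c_neq0 : c != 0.

Lemma vahlen_c_sn : sn_invertible c.
Proof. by split => //; case: vahlen_norm. Qed.

Lemma vahlen_c_unit : c \is a GRing.unit.
Proof. exact: sn_invertible_unit vahlen_c_sn. Qed.

Definition mobius_shift := c^-1 * d.
Definition mobius_residue := b - a * mobius_shift.

Lemma mobius_shift_vec : is_clvec mobius_shift /\ mobius_shift [set l] = 0.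
Proof.
have [_ [[_ /(is_vec_Rn1_hyperplane l_last)[cdv cdl] _ _] _]] := hpsi.
have [k ck] := vahlen_clrev_c.
have conjc : clconj c = (-1) ^+ k *: clrev c.
  by rewrite ck scalerA -expr2 sqrr_sign scale1r.
rewrite /mobius_shift (scalar_norm_invE vahlen_c_sn.1 c_neq0) conjc scalerA -scalerAl.
by split; [exact: is_clvecZ | rewrite clcoefZ cdl mulr0].
Qed.

Lemma d_mobius_shift : d = c * mobius_shift.
Proof. by rewrite /mobius_shift mulrA mulrV ?mul1r // vahlen_c_unit. Qed.

Lemma clrev_c_mobius_residue : exists2 s : R, s != 0 &
  clrev c * mobius_residue =
  mobius_shift * (clrev a * c) - (clrev a * c) * mobius_shift - s%:A.
Proof.
have [s s0 det] := vahlen_det; exists s => //.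
have [_ [[/(is_vec_Rn1_hyperplane l_last)[acv _] _ _ _] _]] := hpsi.
have [vv _] := mobius_shift_vec.
have ca : clrev c * a = clrev a * c by rewrite -[RHS](clrev_vec acv) clrevM clrevK.
have bc : clrev b * c = clrev a * d - s%:A by rewrite -det opprB addrC subrK.
have cb : clrev c * b = mobius_shift * (clrev a * c) - s%:A.
  have -> : clrev c * b = clrev (clrev b * c) by rewrite clrevM clrevK.
  rewrite bc linearB linearZ /= clrev1 clrevM clrevK d_mobius_shift clrevM.
  by rewrite clrev_vec // -mulrA ca.
by rewrite /mobius_residue mulrBr cb [clrev c * (a * _)]mulrA ca addrAC.
Qed.

Lemma sn_invertible_residue : sn_invertible mobius_residue.
Proof.
have [s s0 G] := clrev_c_mobius_residue.
have [_ [[/(is_vec_Rn1_hyperplane l_last)[acv _] _ _ _] _]] := hpsi.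
have [k ck] := vahlen_clrev_c.
have revc : sn_invertible (clrev c).
  split; last first.
    by apply: contra_neq c_neq0 => /(congr1 (@clrev R n)); rewrite clrevK linear0.
  by rewrite ck; apply/has_scalar_normZ/has_scalar_norm_conj; case: vahlen_c_sn.
rewrite -[mobius_residue]mul1r -(mulVr (sn_invertible_unit revc)) -mulrA G.
apply: sn_invertibleM; first exact: sn_invertibleV.
by apply: sn_invertible_commutator => //; case: mobius_shift_vec.
Qed.

Lemma off_hyperplane_add_shift z : off_hyperplane z -> off_hyperplane (z + mobius_shift).
Proof. by move=> zoff; have [vv vl] := mobius_shift_vec; exact: off_hyperplane_shift. Qed.

Lemma mobius_partial_fraction z : off_hyperplane z ->
  psi z = a * c^-1 + mobius_residue * (z + mobius_shift)^-1 * c^-1.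
Proof.
move=> /off_hyperplane_add_shift/off_hyperplane_sn/sn_invertible_unit zU.
have cU := sn_invertible_unit vahlen_c_sn.
rewrite /mobius clmulr claddr d_mobius_shift -mulrDr clinvE ?unitrMl // invrM //.
have -> : a * z + b = a * (z + mobius_shift) + mobius_residue.
  by rewrite /mobius_residue mulrDr addrACA subrr addr0.
by rewrite mulrDl !mulrA mulrK.
Qed.

Lemma mobius_sub_fraction x y : off_hyperplane x -> off_hyperplane y ->
  psi x - psi y =
  - (mobius_residue * (x + mobius_shift)^-1) * (x - y) * ((y + mobius_shift)^-1 * c^-1).
Proof.
move=> xoff yoff; rewrite !mobius_partial_fraction // opprD addrACA subrr add0r.
have shiftU z : off_hyperplane z -> z + mobius_shift \is a GRing.unit.
  by move=> zoff; exact/sn_invertible_unit/off_hyperplane_sn/off_hyperplane_add_shift.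
rewrite -mulrBl -mulrA -mulrBr -mulrA invr_sub ?shiftU //.
rewrite opprD addrACA subrr addr0 -opprB !(mulrN, mulNr) !mulrA.
by rewrite -(mulrA (_ * _) (x - y)) ?mulrA.
Qed.

End ProperCase.

Lemma mobius_denom_unit z : off_hyperplane z -> c * z + d \is a GRing.unit.
Proof.
move=> zoff; have [c0|c0] := eqVneq c 0.
  by rewrite c0 mul0r add0r; exact: sn_invertible_unit (vahlen_affine_sn c0).2.
rewrite d_mobius_shift // -mulrDr unitrMr ?vahlen_c_unit //.
exact/sn_invertible_unit/off_hyperplane_sn/(off_hyperplane_add_shift c0).
Qed.

Lemma mobius_hat z : off_hyperplane z -> psi (clhat z) = clhat (psi z).
Proof.
move=> zoff; have [ha hb hc hd] := vahlen_hat; have hzoff := off_hyperplane_hat l_last zoff.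
rewrite /mobius clmulr claddr !clinvE ?mobius_denom_unit //.
by rewrite clhatM clhatV ?mobius_denom_unit // !clhatD !clhatM ha hb hc hd.
Qed.

Lemma mobius_sub_factor : exists P Q : Cl -> Cl, forall x y,
  off_hyperplane x -> off_hyperplane y ->
  [/\ psi x - psi y = P x * (x - y) * Q y, sn_invertible (P x),
      sn_invertible (Q y) & clnorm (Q (clhat y)) = clnorm (Q y)].
Proof.
have [c0|c0] := eqVneq c 0.
  have [ai di] := vahlen_affine_sn c0.
  exists (fun=> a), (fun=> d^-1) => x y _ _.
  by split => //; [exact: mobius_sub_affine | exact: sn_invertibleV].
have ci := vahlen_c_sn c0; have [vv vl] := mobius_shift_vec c0.
exists (fun x => - (mobius_residue * (x + mobius_shift)^-1)).
exists (fun y => (y + mobius_shift)^-1 * c^-1).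
move=> x y xoff yoff.
have shift_sn z : off_hyperplane z -> sn_invertible (z + mobius_shift).
  by move=> zoff; exact/off_hyperplane_sn/off_hyperplane_add_shift.
split; first exact: mobius_sub_fraction.
- apply/sn_invertibleN/sn_invertibleM; first exact: sn_invertible_residue.
  exact/sn_invertibleV/shift_sn.
- by apply: sn_invertibleM; apply: sn_invertibleV => //; exact: shift_sn.
have hat_shift : clhat y + mobius_shift = clhat (y + mobius_shift).
  by rewrite clhatD (clhat_hyperplane l_last vv vl).
have [yn _] := shift_sn _ yoff; have [hyn _] := shift_sn _ (off_hyperplane_hat l_last yoff).
rewrite hat_shift in hyn.
rewrite !(clnormMr _ (has_scalar_normV ci.1)) hat_shift (clnormV hyn) (clnormV yn).
by rewrite clnorm_hat.
Qed.

End Mobius.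

Theorem lemma2 (R : realType) (n : nat) (hn : (2 < n)%N) (a b c d : Cl R n)
  (hpsi : vahlen a b c d) :
  forall x y : 'I_n -> R, upper x -> upper y ->
    mobius a b c d (clhat (clvec y)) = clhat (mobius a b c d (clvec y)) /\
    clnorm (Cxy (clvec x) (clvec y)) =
    clnorm (Cxy (mobius a b c d (clvec x)) (mobius a b c d (clvec y))).
Proof.
move=> x y ux uy; have [l l_last] : exists l : 'I_n, is_last l.
  have n_gt0 : (n.-1 < n)%N by lia.
  by exists (Ordinal n_gt0); rewrite /is_last.
have [xoff yoff] := (upper_off_hyperplane l_last ux, upper_off_hyperplane l_last uy).
split; first by rewrite (mobius_hat l_last hpsi yoff).
have [P [Q factor]] := mobius_sub_factor l_last hpsi.
have [exy Pi Qi nQ] := factor _ _ xoff yoff.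
have [exy' _ Q'i _] := factor _ _ xoff (off_hyperplane_hat l_last yoff).
rewrite (mobius_hat l_last hpsi yoff) in exy'.
exact/esym/(clnorm_Cxy_factor exy exy' Pi Qi Q'i (upper_sub_hat l_last ux uy) nQ).
Qed.
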